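(* Let $R\geq 1$ be a real number and let $C,t\in \mathbb N$ be fixed. Consider pairs of sequences $\{\lambda_i\},\{\nu_i\}$ of nonnegative integers such that $\lambda_i\leq t$ for all $i$ and $\sum_{i\geq 1}(R\lambda_i+\nu_i) \leq C$. Under these conditions the maximal value of the expression $$A(\{\lambda\},\{\nu\})=\sum_{i\geq 1}\nu_i(\lambda_i-\nu_i)$$ can be attained by a pair of sequences $\{\lambda_i\},\{\nu_i\}$, $i=1,2,\dots,r$, such that: (i) $\lambda_1\geq \lambda_2 \geq \dots \geq \lambda_r$, $\nu_1\geq \nu_2 \geq \dots \geq \nu_r\geq 1$, and $\lambda_i \geq \nu_i$ for all $i$; (ii) $\lambda_1=\lambda_2 = \dots = \lambda_{r-1}=t$; and (iii) for some $0\leq b\leq r-1$ we have $\nu_1= \nu_2 = \dots = \nu_b=\nu_{b+1}+1=\dots=\nu_{r-1}+1$. If moreover $\lambda_r=t$, then also $\nu_r \in \{\nu_1, \nu_1-1\}$.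
   Context: The sequences $\{\lambda_i\},\{\nu_i\}$ are sequences of nonnegative integers indexed by $i\ge 1$ (with only finitely many nonzero terms, since $\sum_i(R\lambda_i+\nu_i)\le C$). *)

From HB Require Import structures.
From mathcomp Require Import all_boot all_order all_algebra.
From mathcomp Require Import reals.
Set Implicit Arguments. Unset Strict Implicit. Unset Printing Implicit Defensive.
Import Order.TTheory GRing.Theory Num.Theory.
Local Open Scope ring_scope.

(* A pair of finitely supported sequences {lambda_i}, {nu_i} (i >= 1) is
   represented by two lists [lam], [nu] of the same length; the 0-based
   entry [nth 0 lam i] is lambda_{i+1}.  Trailing zero pairs contribute
   nothing to either the constraint or the objective. *)

Definition Aval (lam nu : seq nat) : int :=
  \sum_(i < size lam) ((nth 0%N nu i)%:Z * ((nth 0%N lam i)%:Z - (nth 0%N nu i)%:Z)).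

Definition admissible (F : realType) (R : F) (C t : nat) (lam nu : seq nat) : Prop :=
  size lam = size nu /\
  (forall i, (i < size lam)%N -> (nth 0%N lam i <= t)%N) /\
  \sum_(i < size lam) (R * (nth 0%N lam i)%:R + (nth 0%N nu i)%:R) <= C%:R.

(* Encode a pair of sequences as the multiset of pairs (lambda_i, nu_i), and take an
   admissible multiset that maximizes A and, among the maximizers, minimizes
   sum_i (t^2 + 1 - lambda_i^2).  This tie-breaker charges at least 1 for every pair,
   so no pair with nu_i >= lambda_i survives, and it rewards large lambda_i.  Moving
   one unit of lambda or of nu from one pair to another keeps sum_i (R lambda_i + nu_i)
   unchanged, so optimality rules out
   - two pairs with lambda < t: giving a unit of lambda to the pair with the larger
     (nu, lambda) raises A by the difference of the nu's, or lowers the penalty on a tie;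
   - a pair (t, nu) and a pair (lambda, nu') with lambda < t and nu < nu': swapping
     nu and nu' gains (nu' - nu)(t - lambda);
   - two pairs (t, nu), (t, nu') with nu >= nu' + 2: nu (t - nu) is strictly concave.
   Sorting the optimum by decreasing (lambda, nu) then yields the shape (i)-(iii). *)

From HB Require Import structures.
From mathcomp Require Import all_boot all_order all_algebra.
From mathcomp Require Import reals.
From mathcomp Require Import zify.
From Stdlib Require Import Classical.
Import Order.TTheory GRing.Theory Num.Theory.
Set Implicit Arguments. Unset Strict Implicit.

Lemma ex_argmin_nat (T : Type) (P : T -> Prop) (f : T -> nat) :
  (exists x, P x) -> exists x, P x /\ forall y, P y -> f x <= f y.
Proof.
move=> [x0 Px0]; apply: NNPP => nomin.
suff: forall n x, P x -> f x <> n by move/(_ _ x0 Px0); apply.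
elim/ltn_ind => n IH x Px fx; apply: nomin; exists x; split=> // y Py.
by rewrite leqNgt; apply/negP => lt; apply: (IH (f y) _ y Py erefl); rewrite -fx.
Qed.

Lemma ex_argmax_nat (T : Type) (P : T -> Prop) (f : T -> nat) (B : nat) :
  (exists x, P x) -> (forall x, P x -> f x <= B) ->
  exists x, P x /\ forall y, P y -> f y <= f x.
Proof.
move=> ex fB; have [x [Px min]] := ex_argmin_nat (fun x => B - f x) ex.
by exists x; split=> // y Py; have := min y Py; have := fB x Px; have := fB y Py; lia.
Qed.

Lemma perm_nth2 (T : eqType) (x0 : T) (s : seq T) i j :
  i < j < size s -> exists s', perm_eq s [:: nth x0 s i, nth x0 s j & s'].
Proof.
elim: s i j => [|z s IH] [|i] [|j] //=; first by rewrite ltn0 andbF.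
- by move=> lt_js; exists (rem (nth x0 s j) s); rewrite perm_cons perm_to_rem // mem_nth.
- move=> lt_ijs; have [s' pe] := IH i j lt_ijs; exists (z :: s').
  by rewrite perm_sym (perm_catCA [:: _; _] [:: z]) perm_cons perm_sym.
Qed.

Lemma nth_unzip1 (s : seq (nat * nat)) i : nth 0 (unzip1 s) i = (nth (0, 0) s i).1.
Proof. by elim: s i => [|p s IH] [|i] //=. Qed.

Lemma nth_unzip2 (s : seq (nat * nat)) i : nth 0 (unzip2 s) i = (nth (0, 0) s i).2.
Proof. by elim: s i => [|p s IH] [|i] //=. Qed.

Lemma nonincr_within1_split (f : nat -> nat) n :
  (forall i j, i <= j < n -> f j <= f i) -> (forall i, i < n -> f 0 <= (f i).+1) ->
  exists b, [/\ b <= n, forall i, i < b -> f i = f 0 & forall i, b <= i < n -> (f i).+1 = f 0].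
Proof.
move=> f_nonincr f_within1.
have ex_stop : exists i, (i == n) || (f i != f 0) by exists n; rewrite eqxx.
case: (ex_minnP ex_stop) => b stop_b b_min; exists b; split.
- by apply: b_min; rewrite eqxx.
- move=> i lt_ib; apply/eqP; apply: contraTT lt_ib => ne_i.
  by rewrite -leqNgt b_min // ne_i orbT.
- move=> i /andP[le_bi lt_in].
  have lt_bn : b < n by apply: leq_ltn_trans lt_in.
  have /eqP ne_b : f b != f 0 by move: stop_b; rewrite (ltn_eqF lt_bn).
  have le_b0 := f_nonincr 0 b lt_bn.
  have le_ib : f i <= f b by apply: f_nonincr; rewrite le_bi.
  have := f_within1 i lt_in; lia.
Qed.

Definition lam_nu_ge (p q : nat * nat) : bool := (q.1 < p.1) || (q.1 == p.1) && (q.2 <= p.2).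

Lemma lam_nu_ge_total : total lam_nu_ge.
Proof. by move=> [a b] [c d]; rewrite /lam_nu_ge /=; lia. Qed.

Lemma lam_nu_ge_trans : transitive lam_nu_ge.
Proof. by move=> [a b] [c d] [e f]; rewrite /lam_nu_ge /=; lia. Qed.

Lemma lam_nu_ge_refl : reflexive lam_nu_ge.
Proof. by move=> [a b]; rewrite /lam_nu_ge /=; lia. Qed.

Lemma lam_nu_ge_fst p q : lam_nu_ge p q -> q.1 <= p.1.
Proof. by rewrite /lam_nu_ge; lia. Qed.

(* Truncated subtraction: this vanishes on pairs with nu > lambda, where the
   corresponding term of [Aval] is negative. *)
Definition gain (p : nat * nat) : nat := p.2 * (p.1 - p.2).

Definition slack (t : nat) (p : nat * nat) : nat := (t * t).+1 - p.1 * p.1.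

Definition pair_ok (t : nat) (p : nat * nat) : bool := [&& 0 < p.2, p.2 <= p.1 & p.1 <= t].

Lemma gain_incr_lambda l n : n <= l -> gain (l.+1, n) = gain (l, n) + n.
Proof. by move=> le_nl; rewrite /gain /= subSn // mulnS addnC. Qed.

Lemma gain_incr_nu l n : n < l -> gain (l, n.+1) + n.*2.+1 = gain (l, n) + l.
Proof. by rewrite /gain /=; nia. Qed.

Lemma gain_swap_nu l l' n n' : n <= n' <= l -> l <= l' ->
  gain (l', n) + gain (l, n') + (n' - n) * (l' - l) = gain (l', n') + gain (l, n).
Proof. by rewrite /gain /=; nia. Qed.

Lemma slack_incr_lambda t l n : l < t -> slack t (l.+1, n) + l.*2.+1 = slack t (l, n).
Proof.
move=> lt_lt; have : l.+1 * l.+1 <= t * t by apply: leq_mul.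
rewrite /slack /= mulSn mulnS -addnn; lia.
Qed.

Local Open Scope ring_scope.

Lemma big_ord_zip (V : nmodType) (f : nat * nat -> V) (a b : seq nat) :
  size a = size b ->
  \sum_(i < size a) f (nth 0%N a i, nth 0%N b i) = \sum_(p <- zip a b) f p.
Proof.
move=> eq_ab; rewrite (big_nth (0, 0)%N) big_mkord size_zip -eq_ab minnn.
by apply: eq_bigr => i _; rewrite nth_zip.
Qed.

Definition gainz (p : nat * nat) : int := p.2%:Z * (p.1%:Z - p.2%:Z).

Lemma gainzE p : (p.2 <= p.1)%N -> gainz p = (gain p)%:Z.
Proof. by move=> le_p; rewrite /gainz /gain PoszM subzn. Qed.

Lemma gainz_le0 p : ~~ (0 < p.2 <= p.1)%N -> gainz p <= 0.
Proof.
rewrite /gainz; case: (posnP p.2) => [->|p2_gt0]; first by rewrite mul0r.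
by rewrite /= -ltnNge => lt_p; rewrite pmulr_rle0 ?ltz_nat // subr_le0 lez_nat ltnW.
Qed.

Lemma sum_gainz (s : seq (nat * nat)) : all (fun p => p.2 <= p.1)%N s ->
  \sum_(p <- s) gainz p = (\sum_(p <- s) gain p)%:Z.
Proof.
move=> le_s; rewrite -natz natr_sum big_seq [RHS]big_seq; apply: eq_bigr => p /(allP le_s).
by rewrite natz; apply: gainzE.
Qed.

Definition weight (F : realType) (R : F) (p : nat * nat) : F := R * p.1%:R + p.2%:R.

Section Optimal.

Variables (F : realType) (R : F) (C t : nat).
Hypothesis R_ge1 : 1 <= R.

Definition feasible (s : seq (nat * nat)) : Prop :=
  all (pair_ok t) s /\ \sum_(p <- s) weight R p <= C%:R.

Definition optimal (s : seq (nat * nat)) : Prop :=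
  [/\ feasible s,
      forall s', feasible s' -> (\sum_(p <- s') gain p <= \sum_(p <- s) gain p)%N &
      forall s', feasible s' -> (\sum_(p <- s) gain p <= \sum_(p <- s') gain p)%N ->
        (\sum_(p <- s) slack t p <= \sum_(p <- s') slack t p)%N].

Lemma weight_ge0 p : 0 <= weight R p.
Proof. by rewrite addr_ge0 // mulr_ge0 // (le_trans ler01). Qed.

Lemma feasible_gain_le s : feasible s -> (\sum_(p <- s) gain p <= t * C)%N.
Proof.
move=> [ok_s cost_s].
have le_nu : (\sum_(p <- s) p.2 <= C)%N.
  rewrite -(ler_nat F) natr_sum; apply: le_trans cost_s; apply: ler_sum => p _.
  by rewrite /weight lerDr mulr_ge0 // (le_trans ler01).
apply: leq_trans (_ : \sum_(p <- s) t * p.2 <= _)%N.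
  rewrite big_seq [leqRHS]big_seq; apply: leq_sum => p /(allP ok_s)/and3P[_ _ le_p1_t].
  by rewrite /gain mulnC leq_mul2r (leq_trans (leq_subr _ _) le_p1_t) orbT.
by rewrite -big_distrr leq_mul2l le_nu orbT.
Qed.

Lemma optimal_exists : exists s, optimal s.
Proof.
have feasible_nil : feasible [::] by split; rewrite ?big_nil.
have [s1 [feas1 max1]] := ex_argmax_nat (ex_intro _ _ feasible_nil) feasible_gain_le.
have [s2 [[feas2 ge_s1] min2]] := ex_argmin_nat
  (P := fun s => feasible s /\ (\sum_(p <- s1) gain p <= \sum_(p <- s) gain p)%N)
  (fun s => \sum_(p <- s) slack t p)%N (ex_intro _ s1 (conj feas1 (leqnn _))).
exists s2; split=> // [s' /max1 /leq_trans | s' feas' le_s2]; first exact.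
by apply: min2; split=> //; apply: leq_trans le_s2.
Qed.

Lemma optimal_perm s s' : perm_eq s s' -> optimal s -> optimal s'.
Proof.
move=> pe [[ok_s cost_s] gain_max slack_min].
have sum_s (V : nmodType) (f : nat * nat -> V) : \sum_(p <- s) f p = \sum_(p <- s') f p.
  exact: perm_big.
split; first by split; rewrite -?(perm_all _ pe) -?sum_s.
- by move=> s2; rewrite -sum_s; apply: gain_max.
- by move=> s2; rewrite -!sum_s; apply: slack_min.
Qed.

Lemma optimal_pair_ok s x : optimal s -> x \in s -> pair_ok t x.
Proof. by move=> [[ok_s _] _ _] /(allP ok_s). Qed.

Lemma optimal_replace s u u' s0 :
  optimal s -> perm_eq s (u ++ s0) -> all (pair_ok t) u' ->
  \sum_(p <- u') weight R p <= \sum_(p <- u) weight R p ->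
  (\sum_(p <- u') gain p <= \sum_(p <- u) gain p)%N /\
  ((\sum_(p <- u) gain p <= \sum_(p <- u') gain p)%N ->
   (\sum_(p <- u) slack t p <= \sum_(p <- u') slack t p)%N).
Proof.
move=> [[ok_s cost_s] gain_max slack_min] pe ok_u' cost_u'.
have sum_s (V : nmodType) (f : nat * nat -> V) :
    \sum_(p <- s) f p = \sum_(p <- u) f p + \sum_(p <- s0) f p.
  by rewrite (perm_big _ pe) big_cat.
have feas : feasible (u' ++ s0).
  split; first by move: ok_s; rewrite (perm_all _ pe) !all_cat ok_u' => /andP[].
  by apply: le_trans cost_s; rewrite sum_s big_cat lerD2r.
split; first by have := gain_max _ feas; rewrite sum_s big_cat leq_add2r.
by move=> le_gain; have := slack_min _ feas; rewrite !sum_s !big_cat !leq_add2r; apply.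
Qed.

Lemma optimal_nu_lt_lambda s x : optimal s -> x \in s -> (x.2 < x.1)%N.
Proof.
move=> opt x_in; have pe := perm_to_rem x_in.
have drop_x : \sum_(p <- [::]) weight R p <= \sum_(p <- [:: x]) weight R p.
  by rewrite big_nil big_seq1 weight_ge0.
have [_] := optimal_replace (u := [:: x]) (u' := [::]) opt pe isT drop_x.
rewrite !big_seq1 !big_nil => slack_le; rewrite ltnNge; apply/negP => le_x1_x2.
have gain_x0 : gain x = 0%N by move/eqP: le_x1_x2 => /= x1_x2; rewrite /gain x1_x2 muln0.
have /and3P[_ _ le_x1_t] := optimal_pair_ok opt x_in.
have := slack_le; rewrite gain_x0 => /(_ isT).
by rewrite /slack leqn0 subn_eq0 leqNgt ltnS leq_mul.
Qed.

Lemma optimal_exchange s x y s0 x' y' :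
  optimal s -> perm_eq s [:: x, y & s0] -> pair_ok t x' -> pair_ok t y' ->
  (x'.1 + y'.1 = x.1 + y.1)%N -> (x'.2 + y'.2 = x.2 + y.2)%N ->
  (gain x' + gain y' <= gain x + gain y)%N /\
  ((gain x + gain y <= gain x' + gain y')%N ->
   (slack t x + slack t y <= slack t x' + slack t y')%N).
Proof.
move=> opt pe ok_x' ok_y' sum1 sum2.
have weight2 p q : weight R p + weight R q = R * (p.1 + q.1)%:R + (p.2 + q.2)%:R.
  by rewrite /weight !natrD mulrDr addrACA.
have := optimal_replace (u := [:: x; y]) (u' := [:: x'; y']) opt pe.
by rewrite /= ok_x' ok_y' !big_cons !big_nil !addr0 !addn0 weight2 sum1 sum2 -weight2 lexx; apply.
Qed.

Lemma optimal_at_most_one_short s (x y : nat * nat) s0 :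
  optimal s -> perm_eq s [:: x, y & s0] -> (x.1 < t)%N -> (y.1 < t)%N -> False.
Proof.
wlog le_yx : x y s0 / (y.2 < x.2)%N || (y.2 == x.2) && (y.1 <= x.1)%N.
  move=> sym opt pe; have pe' : perm_eq s [:: y, x & s0].
    by rewrite (perm_trans pe) // (perm_catCA [:: _] [:: _]).
  case: (boolP ((y.2 < x.2)%N || (y.2 == x.2) && (y.1 <= x.1)%N)) => [le|lt].
    exact: sym le opt pe.
  by move=> ? ?; apply: (sym y x s0) => //; move: lt; case: eqVneq; lia.
move=> opt pe.
have [x_in y_in] : x \in s /\ y \in s by rewrite !(perm_mem pe) !inE !eqxx orbT.
have := optimal_pair_ok opt x_in; have := optimal_pair_ok opt y_in.
have := optimal_nu_lt_lambda opt y_in.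
case: x y le_yx pe {x_in y_in} => [l1 n1] [[|l2] n2] //= le_yx pe lt_n2 ok_y ok_x lt_l1 lt_l2.
move: ok_x ok_y; rewrite /pair_ok /= => /and3P[n1_gt0 le_n1 _] /and3P[n2_gt0 _ _].
have ok_x' : pair_ok t (l1.+1, n1) by rewrite /pair_ok /=; lia.
have ok_y' : pair_ok t (l2, n2) by rewrite /pair_ok /=; lia.
have [gain_le slack_le] := optimal_exchange opt pe ok_x' ok_y' (addSnnS l1 l2) erefl.
move: gain_le slack_le; rewrite !gain_incr_lambda //.
rewrite -(slack_incr_lambda n1 lt_l1) -(slack_incr_lambda n2 (ltnW lt_l2)).
by rewrite -!addnn; case/orP: le_yx => [|/andP[/eqP-> ]]; lia.
Qed.

Lemma optimal_short_nu_le s (x y : nat * nat) s0 :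
  optimal s -> perm_eq s [:: x, y & s0] -> x.1 = t -> (y.1 < t)%N -> (y.2 <= x.2)%N.
Proof.
move=> opt pe.
have [x_in y_in] : x \in s /\ y \in s by rewrite !(perm_mem pe) !inE !eqxx orbT.
have := optimal_pair_ok opt x_in; have := optimal_pair_ok opt y_in.
case: x y pe {x_in y_in} => [l1 n1] [l2 n2] /= pe ok_y ok_x l1_t lt_l2; subst l1.
move: ok_x ok_y; rewrite /pair_ok /= => /and3P[n1_gt0 le_n1 _] /and3P[n2_gt0 le_n2 _].
rewrite leqNgt; apply/negP => lt_n.
have ok_x' : pair_ok t (t, n2) by rewrite /pair_ok /=; lia.
have ok_y' : pair_ok t (l2, n1) by rewrite /pair_ok /=; lia.
have [gain_le _] := optimal_exchange opt pe ok_x' ok_y' erefl (addnC _ _).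
have := gain_swap_nu (_ : n1 <= n2 <= l2)%N (ltnW lt_l2); rewrite (ltnW lt_n) le_n2.
have : (0 < (n2 - n1) * (t - l2))%N by rewrite muln_gt0 !subn_gt0 lt_n.
lia.
Qed.

Lemma optimal_full_nu_balanced s (x y : nat * nat) s0 :
  optimal s -> perm_eq s [:: x, y & s0] -> x.1 = t -> y.1 = t -> (x.2 <= y.2.+1)%N.
Proof.
move=> opt pe.
have [x_in y_in] : x \in s /\ y \in s by rewrite !(perm_mem pe) !inE !eqxx orbT.
have := optimal_pair_ok opt x_in; have := optimal_pair_ok opt y_in.
have := optimal_nu_lt_lambda opt y_in.
case: x y pe {x_in y_in} => [l1 [|n1]] [l2 n2] //= pe lt_n2 ok_y ok_x l1_t l2_t; subst l1 l2.
move: ok_x ok_y; rewrite /pair_ok /= => /andP[lt_n1 _] /and3P[n2_gt0 _ _].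
rewrite ltnS leqNgt; apply/negP => lt_n.
have ok_x' : pair_ok t (t, n1) by rewrite /pair_ok /=; lia.
have ok_y' : pair_ok t (t, n2.+1) by rewrite /pair_ok /=; lia.
have [gain_le _] := optimal_exchange opt pe ok_x' ok_y' erefl (esym (addSnnS _ _)).
have := gain_incr_nu lt_n1; have := gain_incr_nu lt_n2.
by rewrite -!addnn; lia.
Qed.

Lemma admissible_unzip s : feasible s -> admissible R C t (unzip1 s) (unzip2 s).
Proof.
move=> [ok_s cost_s]; split; first by rewrite !size_map.
split=> [i | ]; last by rewrite (big_ord_zip (weight R)) ?size_map // zip_unzip.
by rewrite size_map nth_unzip1 => /(mem_nth (0, 0)%N)/(allP ok_s)/and3P[].
Qed.

Lemma Aval_unzip s : feasible s -> Aval (unzip1 s) (unzip2 s) = (\sum_(p <- s) gain p)%:Z.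
Proof.
move=> [ok_s _]; rewrite /Aval (big_ord_zip gainz) ?size_map // zip_unzip sum_gainz //.
by apply: sub_all ok_s => p /and3P[].
Qed.

Lemma optimal_Aval_ge s lam nu : optimal s -> admissible R C t lam nu ->
  Aval lam nu <= (\sum_(p <- s) gain p)%:Z.
Proof.
move=> [_ gain_max _] [eq_size [lam_le cost_le]].
set z := zip lam nu; pose ok_part := [seq p <- z | (0 < p.2 <= p.1)%N].
have lam_le_t p : p \in z -> (p.1 <= t)%N.
  move=> p_in; have : p.1 \in unzip1 z by apply: map_f.
  by rewrite unzip1_zip ?eq_size // => /(nthP 0%N)[i lt_i <-]; apply: lam_le.
have feas : feasible ok_part.
  split.
    apply/allP => p; rewrite mem_filter => /andP[/andP[nu_gt0 nu_le] /lam_le_t lam_le_t'].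
    by rewrite /pair_ok nu_gt0 nu_le lam_le_t'.
  apply: le_trans cost_le; rewrite (big_ord_zip (weight R)) // -/z big_filter.
  rewrite [leRHS](bigID [pred p | 0 < p.2 <= p.1]%N) lerDl sumr_ge0 // => p _.
  exact: weight_ge0.
rewrite /Aval (big_ord_zip gainz) // -/z (bigID [pred p | 0 < p.2 <= p.1]%N) /=.
rewrite -big_filter -/ok_part sum_gainz; last first.
  by apply/allP => p; rewrite mem_filter => /andP[/andP[]].
rewrite -[leRHS]addr0 lerD ?lez_nat ?gain_max //.
by rewrite sumr_le0 // => p; apply: gainz_le0.
Qed.

End Optimal.

Section SortedOptimal.

Variables (F : realType) (R : F) (C t : nat) (s : seq (nat * nat)).
Hypotheses (R_ge1 : 1 <= R) (opt_s : optimal R C t s) (sorted_s : sorted lam_nu_ge s).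

Local Notation r := (size s).
Local Notation p i := (nth (0, 0)%N s i).
Local Notation lam i := (nth 0%N (unzip1 s) i).
Local Notation nu i := (nth 0%N (unzip2 s) i).

Lemma sorted_lam_nu_ge i j : (i <= j)%N -> (j < r)%N -> lam_nu_ge (p i) (p j).
Proof.
move=> le_ij lt_jr; apply: (sorted_leq_nth lam_nu_ge_trans lam_nu_ge_refl) => //.
by rewrite inE (leq_ltn_trans le_ij).
Qed.

Lemma sorted_lam_nonincr i : (i.+1 < r)%N -> (lam i.+1 <= lam i)%N.
Proof. by move=> lt_ir; rewrite !nth_unzip1; apply/lam_nu_ge_fst/sorted_lam_nu_ge. Qed.

Lemma optimal_nu_bounds i : (i < r)%N -> [&& 0 < nu i, nu i <= lam i & lam i <= t]%N.
Proof. by move=> lt_ir; rewrite nth_unzip1 nth_unzip2; apply/(optimal_pair_ok opt_s)/mem_nth. Qed.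

Lemma sorted_optimal_lam_full i : (i.+1 < r)%N -> lam i = t.
Proof.
move=> lt_ir; have /and3P[_ _] := optimal_nu_bounds (ltn_trans (ltnSn i) lt_ir).
rewrite nth_unzip1 => lam_i_le; set j := r.-1.
have lt_ijr : (i < j < r)%N by rewrite /j; lia.
have [s0 pe] := perm_nth2 (0, 0)%N lt_ijr.
have /lam_nu_ge_fst lam_ji : lam_nu_ge (p i) (p j) by apply: sorted_lam_nu_ge; lia.
apply/eqP; rewrite eqn_leq lam_i_le leqNgt; apply/negP => lam_i_lt.
exact: (optimal_at_most_one_short R_ge1 opt_s pe lam_i_lt (leq_ltn_trans lam_ji lam_i_lt)).
Qed.

Lemma sorted_optimal_nu_nonincr i j : (i <= j < r)%N -> (nu j <= nu i)%N.
Proof.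
case/andP=> le_ij lt_jr; rewrite !nth_unzip2.
case: (ltngtP i j) le_ij => [lt_ij _|//|<- _ //].
have lt_ijr : (i < j < r)%N by rewrite lt_ij.
have [s0 pe] := perm_nth2 (0, 0)%N lt_ijr.
have := sorted_lam_nu_ge (ltnW lt_ij) lt_jr; rewrite /lam_nu_ge => /orP[lam_ji | /andP[_ //]].
have lam_i : (p i).1 = t by rewrite -nth_unzip1 sorted_optimal_lam_full // (leq_ltn_trans lt_ij).
by apply: (optimal_short_nu_le R_ge1 opt_s pe lam_i); rewrite -lam_i.
Qed.

Lemma sorted_optimal_nu_balanced i : (0 < i < r)%N -> lam i = t -> (nu 0 <= (nu i).+1)%N.
Proof.
move=> lt_0ir; rewrite nth_unzip1 !nth_unzip2 => lam_i.
have [s0 pe] := perm_nth2 (0, 0)%N lt_0ir.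
have lam_0 : (p 0).1 = t by rewrite -nth_unzip1 sorted_optimal_lam_full //; lia.
by apply: (optimal_full_nu_balanced R_ge1 opt_s pe).
Qed.

Lemma sorted_optimal_nu_levels : exists b m : nat, (b <= r.-1)%N /\
  (forall i, (i < b)%N -> nu i = m) /\ (forall i, (b <= i)%N -> (i.+1 < r)%N -> (nu i).+1 = m).
Proof.
have nu_nonincr i j : (i <= j < r.-1)%N -> (nu j <= nu i)%N.
  by move=> lt_ijr; apply: sorted_optimal_nu_nonincr; lia.
have nu_within1 i : (i < r.-1)%N -> (nu 0 <= (nu i).+1)%N.
  case: i => [|i] lt_ir //; apply: sorted_optimal_nu_balanced; first lia.
  by apply: sorted_optimal_lam_full; lia.
have [b [le_b nu_b nu_after]] := nonincr_within1_split nu_nonincr nu_within1.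
exists b, (nu 0); split; first exact: le_b.
by split=> // i le_bi lt_ir; apply: nu_after; lia.
Qed.

Lemma sorted_optimal_nu_last : (0 < r)%N -> lam r.-1 = t ->
  nu r.-1 = nu 0 \/ (nu r.-1).+1 = nu 0.
Proof.
move=> r_gt0 lam_last; case: (posnP r.-1) => [-> | last_gt0]; first by left.
have := @sorted_optimal_nu_nonincr 0%N r.-1; have := @sorted_optimal_nu_balanced r.-1.
lia.
Qed.

End SortedOptimal.

Unset Implicit Arguments.

Theorem proposition7p1 (F : realType) (R : F) (C t : nat) (hR : 1 <= R) :
  exists (lam nu : seq nat),
    admissible R C t lam nu /\
    (forall lam' nu' : seq nat, admissible R C t lam' nu' -> Aval lam' nu' <= Aval lam nu) /\
    let r := size lam in
    (* (i) *)
    (forall i, (i.+1 < r)%N ->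
       (nth 0%N lam i.+1 <= nth 0%N lam i)%N /\ (nth 0%N nu i.+1 <= nth 0%N nu i)%N) /\
    (forall i, (i < r)%N -> (1 <= nth 0%N nu i)%N /\ (nth 0%N nu i <= nth 0%N lam i)%N) /\
    (* (ii) *)
    (forall i, (i.+1 < r)%N -> nth 0%N lam i = t) /\
    (* (iii) *)
    (exists b m : nat, (b <= r.-1)%N /\
       (forall i, (i < b)%N -> nth 0%N nu i = m) /\
       (forall i, (b <= i)%N -> (i.+1 < r)%N -> (nth 0%N nu i).+1 = m)) /\
    ((0 < r)%N -> nth 0%N lam r.-1 = t ->
       nth 0%N nu r.-1 = nth 0%N nu 0 \/ (nth 0%N nu r.-1).+1 = nth 0%N nu 0).
Proof.
have [s0 opt_s0] := optimal_exists C t hR.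
pose s := sort lam_nu_ge s0.
have opt_s : optimal R C t s by apply: optimal_perm opt_s0; rewrite perm_sym perm_sort.
have sorted_s : sorted lam_nu_ge s := sort_sorted lam_nu_ge_total s0.
have [feas_s _ _] := opt_s.
exists (unzip1 s), (unzip2 s); split; first exact: admissible_unzip.
split; first by move=> lam nu adm; rewrite (Aval_unzip feas_s); apply: optimal_Aval_ge adm.
rewrite /= size_map.
split.
  by move=> i lt_ir; rewrite sorted_lam_nonincr // (sorted_optimal_nu_nonincr hR opt_s) ?leqnSn.
split; first by move=> i /(optimal_nu_bounds opt_s)/and3P[].
split; first exact: sorted_optimal_lam_full hR opt_s sorted_s.
split; first exact: sorted_optimal_nu_levels hR opt_s sorted_s.
exact: sorted_optimal_nu_last hR opt_s sorted_s.
Qed.
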